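(* Let $X$ be a complete CAT(0) space and $(T_n)_{n\in\mathbb{N}}$ a family of self-mappings of $X$, each satisfying property $(P_2)$, with $F:=\bigcap_{n\in\mathbb{N}} Fix(T_n)\neq\emptyset$. For $x\in X$ let $x_0:=x$ and $x_{n+1}:=T_nx_n$ for all $n\in\mathbb{N}$. Let $(\gamma_n)$ be a sequence of positive real numbers with $\sum_{n=0}^\infty\gamma_n^2=\infty$. Assume: (C1) for all $n,m\in\mathbb{N}$ and all $w\in X$, $d(T_nw,T_mw)\le \frac{|\gamma_n-\gamma_m|}{\gamma_n}d(w,T_nw)$; (C2) the sequence $\left(\frac{d(x_n,x_{n+1})}{\gamma_n}\right)_{n\in\mathbb{N}}$ is nonincreasing. Then $(x_n)$ $\Delta$-converges to a point of $F$.
   Context: A geodesic space $(X,d)$ is CAT(0) if for all $z\in X$, all geodesics $\gamma:[a,b]\to X$ and all $t\in[0,1]$, $d^2(z,\gamma((1-t)a+tb))\le(1-t)d^2(z,\gamma(a))+td^2(z,\gamma(b))-t(1-t)d^2(\gamma(a),\gamma(b))$. A mapping $T:X\to X$ satisfies property $(P_2)$ if for all $x,y\in X$, $2d^2(Tx,Ty)\le d^2(x,Ty)+d^2(y,Tx)-d^2(x,Tx)-d^2(y,Ty)$. $Fix(T)$ denotes the fixed point set. For a bounded sequence $(u_n)$, with $r(y,(u_n)):=\limsup_n d(y,u_n)$, an asymptotic center of $(u_n)$ is a point $c\in X$ minimizing $y\mapsto r(y,(u_n))$ over $X$. A bounded sequence $(x_n)$ $\Delta$-converges to $x$ if every subsequence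 of $(x_n)$ has $x$ as its unique asymptotic center. *)

From Stdlib Require Import Reals.
From Coquelicot Require Import Coquelicot.
Open Scope R_scope.

Definition is_metric {X : Type} (d : X -> X -> R) : Prop :=
  (forall x y, 0 <= d x y) /\
  (forall x y, d x y = 0 <-> x = y) /\
  (forall x y, d x y = d y x) /\
  (forall x y z, d x z <= d x y + d y z).

Definition is_geodesic {X : Type} (d : X -> X -> R) (a b : R) (g : R -> X) : Prop :=
  a <= b /\
  forall s t, a <= s <= b -> a <= t <= b -> d (g s) (g t) = Rabs (s - t).

Definition geodesic_space {X : Type} (d : X -> X -> R) : Prop :=
  forall x y : X, exists (a b : R) (g : R -> X),
    is_geodesic d a b g /\ g a = x /\ g b = y.

Definition CAT0 {X : Type} (d : X -> X -> R) : Prop :=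
  is_metric d /\ geodesic_space d /\
  forall (z : X) (a b : R) (g : R -> X) (t : R),
    is_geodesic d a b g -> 0 <= t <= 1 ->
    (d z (g ((1 - t) * a + t * b))) ^ 2 <=
      (1 - t) * (d z (g a)) ^ 2 + t * (d z (g b)) ^ 2
      - t * (1 - t) * (d (g a) (g b)) ^ 2.

Definition cauchy_seq {X : Type} (d : X -> X -> R) (u : nat -> X) : Prop :=
  forall eps, 0 < eps -> exists N, forall n m, (N <= n)%nat -> (N <= m)%nat ->
    d (u n) (u m) < eps.

Definition complete_metric {X : Type} (d : X -> X -> R) : Prop :=
  forall u : nat -> X, cauchy_seq d u ->
    exists l, forall eps, 0 < eps -> exists N, forall n, (N <= n)%nat -> d (u n) l < eps.

Definition property_P2 {X : Type} (d : X -> X -> R) (T : X -> X) : Prop :=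
  forall x y : X,
    2 * (d (T x) (T y)) ^ 2 <=
      (d x (T y)) ^ 2 + (d y (T x)) ^ 2 - (d x (T x)) ^ 2 - (d y (T y)) ^ 2.

Definition is_fixed {X : Type} (T : X -> X) (p : X) : Prop := T p = p.

Fixpoint iter_seq {X : Type} (T : nat -> X -> X) (x : X) (n : nat) : X :=
  match n with
  | O => x
  | S k => T k (iter_seq T x k)
  end.

Definition bounded_seq {X : Type} (d : X -> X -> R) (u : nat -> X) : Prop :=
  exists (p : X) (M : R), forall n, d p (u n) <= M.

Definition asym_radius {X : Type} (d : X -> X -> R) (y : X) (u : nat -> X) : Rbar :=
  LimSup_seq (fun n => d y (u n)).

Definition asymptotic_center {X : Type} (d : X -> X -> R) (u : nat -> X) (c : X) : Prop :=
  forall y : X, Rbar_le (asym_radius d c u) (asym_radius d y u).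

Definition unique_asymptotic_center {X : Type} (d : X -> X -> R) (u : nat -> X) (c : X) : Prop :=
  asymptotic_center d u c /\ forall c', asymptotic_center d u c' -> c' = c.

Definition Delta_converges {X : Type} (d : X -> X -> R) (u : nat -> X) (x : X) : Prop :=
  bounded_seq d u /\
  forall phi : nat -> nat, (forall n, (phi n < phi (S n))%nat) ->
    unique_asymptotic_center d (fun n => u (phi n)) x.

From Stdlib Require Import Reals Lra Psatz Classical ClassicalEpsilon.
From Coquelicot Require Import Coquelicot.
Open Scope R_scope.

(* Property (P2) with a common fixed point q gives the Fejér inequality
   d(x_{n+1}, q)^2 <= d(x_n, q)^2 - d(x_n, x_{n+1})^2, so (x_n) is bounded, the
   distances to any common fixed point converge, and the steps are square-summable.
   Together with (C2) and sum gamma_n^2 = oo this forces d(x_n, x_{n+1}) / gamma_n -> 0,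
   and then (C1) yields d(x_n, T_m x_n) -> 0 for every m.  In a complete CAT(0)
   space every bounded sequence has a unique asymptotic center (midpoints of almost
   minimizers are nearly as good, so almost minimizers form a Cauchy family), and (P2)
   forces the center of an asymptotically regular sequence to be fixed by each T_m.
   The radius at a common fixed point is a limit, hence the same along every
   subsequence; so the center of (x_n) is also the center of each subsequence. *)

Lemma le_of_forall_le_add_mul_eps (a b K : R) :
  (forall eps, 0 < eps -> eps <= 1 -> a <= b + K * eps) -> a <= b.
Proof.
  intros H. apply Rle_plus_epsilon. intros e He.
  assert (HK : 0 < Rabs K + 1) by (pose proof (Rabs_pos K); lra).
  set (eps := Rmin 1 (e / (Rabs K + 1))).
  assert (Heps0 : 0 < eps).
  { apply Rmin_glb_lt; [lra | apply Rdiv_lt_0_compat; lra]. }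
  assert (Hepse : (Rabs K + 1) * eps <= e).
  { assert (eps <= e / (Rabs K + 1)) by apply Rmin_r.
    assert (e / (Rabs K + 1) * (Rabs K + 1) = e) by (field; lra). nra. }
  pose proof (Rle_abs K).
  specialize (H eps Heps0 (Rmin_l _ _)). nra.
Qed.

Lemma pow2_ge_of_sub_lt (r eps b : R) :
  0 <= r -> 0 < eps -> 0 <= b -> r - eps < b -> r ^ 2 - 2 * eps * r <= b ^ 2.
Proof. intros; destruct (Rle_dec eps r); nra. Qed.

Lemma pow2_le_of_lt_add (r eps b : R) :
  0 < eps -> eps <= 1 -> 0 <= b -> b < r + eps -> b ^ 2 <= r ^ 2 + (2 * r + 1) * eps.
Proof. intros; nra. Qed.

Lemma ex_inf_nonneg {X : Type} (f : X -> R) (y0 : X) :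
  (forall y, 0 <= f y) ->
  exists r0, 0 <= r0 /\ (forall y, r0 <= f y) /\
    forall eps, 0 < eps -> exists y, f y < r0 + eps.
Proof.
  intros Hf.
  set (E := fun r => exists y, r = - f y).
  destruct (completeness E) as [m [Hub Hlub]].
  - exists 0. intros r [y ->]. specialize (Hf y). lra.
  - exists (- f y0), y0. reflexivity.
  - exists (- m). split; [|split].
    + assert (m <= 0); [|lra].
      apply Hlub. intros r [y ->]. specialize (Hf y). lra.
    + intros y. assert (- f y <= m) by (apply Hub; exists y; reflexivity). lra.
    + intros eps He. apply NNPP. intros Hno.
      assert (m <= m - eps); [|lra].
      apply Hlub. intros r [y ->].
      assert (~ f y < - m + eps) by (intros Hy; apply Hno; exists y; exact Hy).
      lra.
Qed.

Lemma eventually_inv_INR_succ_lt (delta : R) :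
  0 < delta -> eventually (fun k => / (INR k + 1) < delta).
Proof.
  intros Hdelta. destruct (archimed_cor1 delta Hdelta) as [N [HN HN0]].
  exists N. intros k Hk.
  apply Rle_lt_trans with (/ INR N); [|exact HN].
  apply Rinv_le_contravar; [apply lt_0_INR; exact HN0|].
  apply le_INR in Hk. lra.
Qed.

Lemma is_lim_seq_0_eventually_lt (u : nat -> R) (eps : R) :
  is_lim_seq u 0 -> 0 < eps -> eventually (fun n => u n < eps).
Proof.
  intros Hu He. apply is_lim_seq_spec in Hu.
  destruct (Hu (mkposreal eps He)) as [N HN]. exists N. intros n Hn.
  specialize (HN n Hn). simpl in HN. rewrite Rminus_0_r in HN.
  pose proof (Rle_abs (u n)). lra.
Qed.

Lemma is_lim_seq_0_of_sum_bounded (f : nat -> R) (B : R) :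
  (forall k, 0 <= f k) -> (forall N, sum_f_R0 f N <= B) -> is_lim_seq f 0.
Proof.
  intros Hf HB.
  destruct (ex_finite_lim_seq_incr (fun N => sum_f_R0 f N) B) as [l Hl];
    [intros n; simpl; specialize (Hf (S n)); lra | exact HB |].
  apply ex_series_lim_0, ex_series_Reals_1. exists l. now apply is_lim_seq_Reals.
Qed.

(* The limit l of the nonincreasing ratios satisfies a_k >= l g_k, so
   l^2 sum g_k^2 <= sum a_k^2 is bounded; divergence of sum g_k^2 forces l = 0. *)
Lemma is_lim_seq_ratio_0 (a g : nat -> R) (B : R) :
  (forall k, 0 <= a k) -> (forall k, 0 < g k) ->
  (forall M, exists N, M < sum_f_R0 (fun k => g k ^ 2) N) ->
  (forall n, a (S n) / g (S n) <= a n / g n) ->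
  (forall N, sum_f_R0 (fun k => a k ^ 2) N <= B) ->
  is_lim_seq (fun n => a n / g n) 0.
Proof.
  intros Ha Hg Hdiv Hdecr HB.
  set (s := fun n => a n / g n) in *.
  assert (Hs0 : forall n, 0 <= s n) by (intros n; apply Rdiv_le_0_compat; auto).
  destruct (ex_finite_lim_seq_decr s 0 Hdecr Hs0) as [l Hl].
  assert (Hl_le := is_lim_seq_decr_compare s l Hl Hdecr).
  assert (Hl0 : 0 <= l) by exact (is_lim_seq_le (fun _ => 0) s 0 l Hs0 (is_lim_seq_const 0) Hl).
  assert (Hsum : forall N, l ^ 2 * sum_f_R0 (fun k => g k ^ 2) N <= B).
  { intros N. rewrite scal_sum. eapply Rle_trans; [|exact (HB N)].
    apply sum_Rle. intros k _.
    assert (Hak : a k = g k * s k) by (unfold s; field; specialize (Hg k); lra).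
    assert (Hgl : 0 <= g k * l <= g k * s k).
    { specialize (Hg k). split; [apply Rmult_le_pos|apply Rmult_le_compat_l]; auto; lra. }
    rewrite Hak. nra. }
  replace l with 0 in Hl; [exact Hl|].
  destruct (Rle_lt_or_eq_dec 0 l Hl0) as [Hlpos|]; [exfalso|assumption].
  assert (Hl2 : 0 < l ^ 2) by (apply pow_lt; exact Hlpos).
  destruct (Hdiv (B / l ^ 2)) as [N HN]. specialize (Hsum N).
  apply Rmult_lt_compat_l with (r := l ^ 2) in HN; [|exact Hl2].
  replace (l ^ 2 * (B / l ^ 2)) with B in HN by (field; lra). lra.
Qed.

Lemma is_lim_seq_0_of_pow2 (u : nat -> R) :
  (forall n, 0 <= u n) -> is_lim_seq (fun n => u n ^ 2) 0 -> is_lim_seq u 0.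
Proof.
  intros Hu Hu2. rewrite <- sqrt_0.
  apply (is_lim_seq_ext (fun n => sqrt (u n ^ 2))); [intros n; apply sqrt_pow2, Hu|].
  apply is_lim_seq_continuous; [apply continuity_pt_sqrt, Rle_refl | exact Hu2].
Qed.

Lemma LimSup_seq_subseq_decr (u : nat -> R) (phi : nat -> nat) :
  (forall n, u (S n) <= u n) -> (forall n, (phi n < phi (S n))%nat) ->
  LimSup_seq (fun n => u (phi n)) = LimSup_seq u.
Proof.
  intros Hdecr Hphi. destruct (ex_lim_seq_decr u Hdecr) as [l Hl].
  rewrite (is_LimSup_seq_unique u l (is_lim_LimSup_seq _ _ Hl)).
  apply is_LimSup_seq_unique, is_lim_LimSup_seq.
  exact (is_lim_seq_subseq u l phi (eventually_subseq phi Hphi) Hl).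
Qed.

Section Metric.
Context {X : Type} (d : X -> X -> R).
Hypothesis Hd : is_metric d.

Lemma dist_ge0 x y : 0 <= d x y.
Proof. apply Hd. Qed.

Lemma dist_eq0 x y : d x y = 0 <-> x = y.
Proof. apply Hd. Qed.

Lemma dist_sym x y : d x y = d y x.
Proof. apply Hd. Qed.

Lemma dist_triangle x y z : d x z <= d x y + d y z.
Proof. apply Hd. Qed.

Lemma eq_of_dist_sq_le0 x y : d x y ^ 2 <= 0 -> x = y.
Proof. intros H. apply dist_eq0. pose proof (dist_ge0 x y). nra. Qed.

Definition rad (v : nat -> X) (y : X) : R := real (asym_radius d y v).

Lemma is_LimSup_rad (v : nat -> X) (y : X) :
  bounded_seq d v -> is_LimSup_seq (fun n => d y (v n)) (rad v y).
Proof.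
  intros [p [M HM]]. unfold rad, asym_radius.
  destruct (ex_LimSup_seq (fun n => d y (v n))) as [l Hl].
  rewrite (is_LimSup_seq_unique _ _ Hl).
  destruct l as [l| |]; simpl in Hl |- *; [exact Hl|exfalso|exfalso].
  - destruct (Hl (d y p + M) 0%nat) as [n [_ Hn]].
    pose proof (dist_triangle y p (v n)). specialize (HM n). lra.
  - destruct (Hl 0) as [N HN]. specialize (HN N (le_n _)).
    pose proof (dist_ge0 y (v N)). lra.
Qed.

Lemma asym_radius_rad (v : nat -> X) (y : X) :
  bounded_seq d v -> asym_radius d y v = Finite (rad v y).
Proof. intros Hb. apply is_LimSup_seq_unique, is_LimSup_rad, Hb. Qed.

Lemma rad_eventually_lt (v : nat -> X) (y : X) (eps : R) :
  bounded_seq d v -> 0 < eps -> eventually (fun n => d y (v n) < rad v y + eps).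
Proof. intros Hb He. exact (proj2 (is_LimSup_rad v y Hb (mkposreal eps He))). Qed.

Lemma rad_frequently_gt (v : nat -> X) (y : X) (eps : R) (P : nat -> Prop) :
  bounded_seq d v -> 0 < eps -> eventually P ->
  exists n, P n /\ rad v y - eps < d y (v n).
Proof.
  intros Hb He [N HN].
  destruct (proj1 (is_LimSup_rad v y Hb (mkposreal eps He)) N) as [n [Hn Hgt]].
  exists n. split; [apply HN, Hn | exact Hgt].
Qed.

Lemma rad_ge0 (v : nat -> X) (y : X) : bounded_seq d v -> 0 <= rad v y.
Proof.
  intros Hb. apply Rnot_lt_le. intros Hneg.
  destruct (rad_eventually_lt v y (- rad v y / 2) Hb ltac:(lra)) as [N HN].
  specialize (HN N (le_n _)). pose proof (dist_ge0 y (v N)). lra.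
Qed.

Lemma rad_le_add_dist (v : nat -> X) (y z : X) :
  bounded_seq d v -> rad v y <= rad v z + d y z.
Proof.
  intros Hb. apply (le_of_forall_le_add_mul_eps _ _ 2). intros eps He _.
  destruct (rad_frequently_gt v y eps _ Hb He (rad_eventually_lt v z eps Hb He))
    as [n [Hz Hy]].
  pose proof (dist_triangle y z (v n)). lra.
Qed.

Lemma asymptotic_center_rad (v : nat -> X) (c : X) :
  bounded_seq d v -> asymptotic_center d v c <-> forall y, rad v c <= rad v y.
Proof.
  intros Hb. unfold asymptotic_center.
  split; intros H y; specialize (H y); rewrite !asym_radius_rad in * by exact Hb; exact H.
Qed.

Lemma P2_dist_fixed_sq (F : X -> X) (q w : X) :
  property_P2 d F -> F q = q -> d (F w) q ^ 2 <= d w q ^ 2 - d w (F w) ^ 2.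
Proof.
  intros HP Hq. specialize (HP w q). rewrite Hq in HP.
  assert (d q q = 0) by (apply dist_eq0; reflexivity).
  rewrite (dist_sym q (F w)) in HP. nra.
Qed.

Lemma P2_dist_image_sq (F : X -> X) (c w : X) :
  property_P2 d F ->
  d c (F c) ^ 2 <= (d c w + d w (F w)) ^ 2 - d (F c) w ^ 2 + 4 * d (F c) w * d w (F w).
Proof.
  intros HP. specialize (HP w c).
  pose proof (dist_ge0 (F w) (F c)). pose proof (dist_ge0 c (F w)).
  pose proof (dist_ge0 w (F w)). pose proof (dist_ge0 (F c) w).
  pose proof (dist_ge0 c w). pose proof (dist_ge0 c (F c)).
  assert (Hf : d c (F w) <= d c w + d w (F w)) by apply dist_triangle.
  assert (Hb : d (F c) w <= d (F w) (F c) + d w (F w)).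
  { rewrite (dist_sym (F w) (F c)), (dist_sym w (F w)). apply dist_triangle. }
  rewrite (dist_sym w (F c)) in HP.
  set (e := d w (F w)) in *. set (b := d (F c) w) in *.
  set (a := d (F w) (F c)) in *. set (f := d c (F w)) in *.
  assert (Hf2 : f ^ 2 <= (d c w + e) ^ 2) by nra.
  assert (Hab : b ^ 2 - 2 * a ^ 2 <= - b ^ 2 + 4 * b * e).
  { destruct (Rle_dec e b); [|nra].
    assert ((b - e) ^ 2 <= a ^ 2) by nra. nra. }
  nra.
Qed.

Lemma P2_center_fixed (F : X -> X) (v : nat -> X) (c : X) :
  property_P2 d F -> bounded_seq d v ->
  is_lim_seq (fun n => d (v n) (F (v n))) 0 ->
  (forall y, rad v c <= rad v y) -> F c = c.
Proof.
  intros HP Hb Hreg Hc. symmetry. apply eq_of_dist_sq_le0.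
  set (r := rad v c). set (D := d c (F c)).
  assert (Hr : 0 <= r) by apply rad_ge0, Hb.
  assert (HD : 0 <= D) by apply dist_ge0.
  apply (le_of_forall_le_add_mul_eps _ _ (10 * r + 4 * D + 8)). intros eps He He1.
  destruct (rad_frequently_gt v (F c) eps _ Hb He
              (filter_and _ _ (is_lim_seq_0_eventually_lt _ eps Hreg He)
                              (rad_eventually_lt v c eps Hb He)))
    as [n [[He_n Hc_n] HFc_n]].
  assert (HrF := Hc (F c)). fold r in Hc_n, HrF.
  pose proof (P2_dist_image_sq F c (v n) HP) as Himg.
  assert (Hb_up : d (F c) (v n) <= d c (F c) + d c (v n)).
  { rewrite (dist_sym c (F c)). apply dist_triangle. }
  pose proof (dist_ge0 c (v n)). pose proof (dist_ge0 (v n) (F (v n))).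
  pose proof (dist_ge0 (F c) (v n)).
  fold D in Himg, Hb_up.
  set (e := d (v n) (F (v n))) in *. set (b := d (F c) (v n)) in *.
  assert (Hb_low := pow2_ge_of_sub_lt r eps b Hr He ltac:(assumption) ltac:(lra)).
  assert ((d c (v n) + e) ^ 2 <= (r + 2 * eps) ^ 2) by nra.
  assert (b * e <= (D + r + 1) * eps) by (apply Rmult_le_compat; lra).
  rewrite Rplus_0_l. nra.
Qed.

End Metric.

Section CAT0.
Context {X : Type} (d : X -> X -> R).
Hypothesis Hcat : CAT0 d.

Let Hd : is_metric d := proj1 Hcat.

Lemma CAT0_midpoint (y1 y2 : X) :
  exists m, forall z, d z m ^ 2 <= / 2 * d z y1 ^ 2 + / 2 * d z y2 ^ 2 - / 4 * d y1 y2 ^ 2.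
Proof.
  destruct (proj2 Hcat) as (Hgeod & Hineq).
  destruct (Hgeod y1 y2) as (a & b & g & Hg & Ha & Hb).
  exists (g ((1 - / 2) * a + / 2 * b)). intros z.
  pose proof (Hineq z a b g (/ 2) Hg ltac:(lra)) as H.
  rewrite Ha, Hb in H. lra.
Qed.

Lemma rad_midpoint (v : nat -> X) (y1 y2 : X) : bounded_seq d v ->
  exists m, rad d v m ^ 2 <= / 2 * rad d v y1 ^ 2 + / 2 * rad d v y2 ^ 2 - / 4 * d y1 y2 ^ 2.
Proof.
  intros Hb. destruct (CAT0_midpoint y1 y2) as [m Hm]. exists m.
  set (r := rad d v m). set (r1 := rad d v y1). set (r2 := rad d v y2).
  assert (Hr : 0 <= r) by apply (rad_ge0 d Hd v m Hb).
  assert (Hr1 : 0 <= r1) by apply (rad_ge0 d Hd v y1 Hb).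
  assert (Hr2 : 0 <= r2) by apply (rad_ge0 d Hd v y2 Hb).
  apply (le_of_forall_le_add_mul_eps _ _ (2 * r + r1 + r2 + 1)). intros eps He He1.
  destruct (rad_frequently_gt d Hd v m eps _ Hb He
              (filter_and _ _ (rad_eventually_lt d Hd v y1 eps Hb He)
                              (rad_eventually_lt d Hd v y2 eps Hb He)))
    as [n [[H1 H2] H]].
  specialize (Hm (v n)). rewrite !(dist_sym d Hd (v n)) in Hm.
  pose proof (pow2_ge_of_sub_lt r eps _ Hr He (dist_ge0 d Hd _ _) H).
  pose proof (pow2_le_of_lt_add r1 eps _ He He1 (dist_ge0 d Hd _ _) H1).
  pose proof (pow2_le_of_lt_add r2 eps _ He He1 (dist_ge0 d Hd _ _) H2).
  nra.
Qed.

Lemma rad_center_unique (v : nat -> X) (c c' : X) : bounded_seq d v ->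
  (forall y, rad d v c <= rad d v y) -> (forall y, rad d v c' <= rad d v y) -> c' = c.
Proof.
  intros Hb Hc Hc'. apply (eq_of_dist_sq_le0 d Hd). rewrite (dist_sym d Hd).
  destruct (rad_midpoint v c c' Hb) as [m Hm].
  pose proof (Hc c'). pose proof (Hc' c). pose proof (Hc m).
  pose proof (rad_ge0 d Hd v c Hb). nra.
Qed.

Lemma rad_almost_min_close (v : nat -> X) (r0 : R) :
  bounded_seq d v -> 0 <= r0 -> (forall y, r0 <= rad d v y) ->
  forall eps, 0 < eps -> exists delta, 0 < delta /\
    forall y z, rad d v y < r0 + delta -> rad d v z < r0 + delta -> d y z < eps.
Proof.
  intros Hb Hr0 Hlow eps He.
  set (delta := Rmin 1 (eps ^ 2 / (4 * (2 * r0 + 1)))).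
  assert (Hdelta0 : 0 < delta).
  { apply Rmin_glb_lt; [lra|]. apply Rdiv_lt_0_compat; nra. }
  assert (Hdelta : 4 * (2 * r0 + 1) * delta <= eps ^ 2).
  { assert (delta <= eps ^ 2 / (4 * (2 * r0 + 1))) by apply Rmin_r.
    assert (eps ^ 2 / (4 * (2 * r0 + 1)) * (4 * (2 * r0 + 1)) = eps ^ 2) by (field; lra).
    nra. }
  assert (Hdelta1 : delta <= 1) by apply Rmin_l.
  exists delta. split; [exact Hdelta0|]. intros y z Hy Hz.
  destruct (rad_midpoint v y z Hb) as [m Hm].
  pose proof (Hlow y). pose proof (Hlow z). pose proof (Hlow m).
  pose proof (dist_ge0 d Hd y z).
  assert (rad d v y ^ 2 < (r0 + delta) ^ 2) by nra.
  assert (rad d v z ^ 2 < (r0 + delta) ^ 2) by nra.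
  assert (r0 ^ 2 <= rad d v m ^ 2) by nra.
  nra.
Qed.

Lemma rad_center_exists (v : nat -> X) :
  complete_metric d -> bounded_seq d v -> exists c, forall y, rad d v c <= rad d v y.
Proof.
  intros Hcomp Hb.
  destruct (ex_inf_nonneg (rad d v) (v 0%nat) (fun y => rad_ge0 d Hd v y Hb))
    as (r0 & Hr0 & Hlow & Happrox).
  destruct (choice (fun k y => rad d v y < r0 + / (INR k + 1))) as [yk Hyk].
  { intros k. apply Happrox, Rinv_0_lt_compat. pose proof (pos_INR k). lra. }
  destruct (Hcomp yk) as [l Hl].
  { intros eps He.
    destruct (rad_almost_min_close v r0 Hb Hr0 Hlow eps He) as (delta & Hdelta & Hclose).
    destruct (eventually_inv_INR_succ_lt delta Hdelta) as [N HN].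
    exists N. intros j k Hj Hk.
    apply Hclose.
    - pose proof (Hyk j). pose proof (HN j Hj). lra.
    - pose proof (Hyk k). pose proof (HN k Hk). lra. }
  exists l. intros y. apply Rle_trans with r0; [|apply Hlow].
  apply (le_of_forall_le_add_mul_eps _ _ 2). intros eps He _.
  destruct (filter_and _ _ (Hl eps He) (eventually_inv_INR_succ_lt eps He)) as [N HN].
  destruct (HN N (le_n _)) as [Hdist Hinv].
  pose proof (rad_le_add_dist d Hd v l (yk N) Hb).
  pose proof (Hyk N). rewrite (dist_sym d Hd l) in *. lra.
Qed.

End CAT0.

Section Iteration.
Context {X : Type} (d : X -> X -> R) (T : nat -> X -> X) (x : X).
Hypothesis Hd : is_metric d.
Hypothesis HP2 : forall n, property_P2 d (T n).

Local Notation u := (iter_seq T x).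

Lemma iter_seq_step_fejer (q : X) (n : nat) : is_fixed (T n) q ->
  d (u (S n)) q ^ 2 <= d (u n) q ^ 2 - d (u n) (u (S n)) ^ 2.
Proof. exact (P2_dist_fixed_sq d Hd (T n) q (u n) (HP2 n)). Qed.

Lemma iter_seq_dist_fixed_decr (q : X) : (forall n, is_fixed (T n) q) ->
  forall n, d q (u (S n)) <= d q (u n).
Proof.
  intros Hq n. pose proof (iter_seq_step_fejer q n (Hq n)).
  rewrite !(dist_sym d Hd _ q) in *.
  pose proof (dist_ge0 d Hd q (u n)). pose proof (dist_ge0 d Hd q (u (S n))). nra.
Qed.

Lemma iter_seq_subseq_bounded (q : X) (phi : nat -> nat) : (forall n, is_fixed (T n) q) ->
  bounded_seq d (fun n => u (phi n)).
Proof.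
  intros Hq. exists q, (d q x). intros n.
  induction (phi n) as [|k IHk]; [apply Rle_refl|].
  eapply Rle_trans; [apply (iter_seq_dist_fixed_decr q Hq)|exact IHk].
Qed.

Lemma iter_seq_steps_sq_sum_le (q : X) : (forall n, is_fixed (T n) q) ->
  forall N, sum_f_R0 (fun k => d (u k) (u (S k)) ^ 2) N <= d x q ^ 2.
Proof.
  intros Hq N.
  assert (H : sum_f_R0 (fun k => d (u k) (u (S k)) ^ 2) N <= d x q ^ 2 - d (u (S N)) q ^ 2).
  { induction N as [|N IH].
    - pose proof (iter_seq_step_fejer q 0 (Hq 0%nat)). simpl in *. lra.
    - pose proof (iter_seq_step_fejer q (S N) (Hq (S N))). simpl in *. lra. }
  pose proof (pow2_ge_0 (d (u (S N)) q)). lra.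
Qed.

Lemma rad_iter_seq_subseq (q : X) (phi : nat -> nat) :
  (forall n, is_fixed (T n) q) -> (forall n, (phi n < phi (S n))%nat) ->
  rad d (fun n => u (phi n)) q = rad d u q.
Proof.
  intros Hq Hphi. unfold rad, asym_radius.
  rewrite (LimSup_seq_subseq_decr (fun n => d q (u n)) phi); [reflexivity| |exact Hphi].
  exact (iter_seq_dist_fixed_decr q Hq).
Qed.

Section Regularity.
Variable gamma : nat -> R.
Hypothesis Hgamma : forall n, 0 < gamma n.
Hypothesis Hgamma_div : forall M, exists N, M < sum_f_R0 (fun k => gamma k ^ 2) N.
Hypothesis HC1 : forall (n m : nat) (w : X),
  d (T n w) (T m w) <= Rabs (gamma n - gamma m) / gamma n * d w (T n w).
Hypothesis HC2 : forall n,
  d (u (S n)) (u (S (S n))) / gamma (S n) <= d (u n) (u (S n)) / gamma n.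

Lemma iter_seq_dist_image_le (m n : nat) :
  d (u n) (T m (u n)) <= 2 * d (u n) (u (S n)) + gamma m * (d (u n) (u (S n)) / gamma n).
Proof.
  pose proof (HC1 n m (u n)) as H. change (T n (u n)) with (u (S n)) in H |- *.
  pose proof (dist_triangle d Hd (u n) (u (S n)) (T m (u n))).
  pose proof (Hgamma n). pose proof (Hgamma m). pose proof (dist_ge0 d Hd (u n) (u (S n))).
  assert (Rabs (gamma n - gamma m) <= gamma n + gamma m).
  { unfold Rabs. destruct (Rcase_abs (gamma n - gamma m)); lra. }
  assert (Rabs (gamma n - gamma m) / gamma n * d (u n) (u (S n))
          <= (gamma n + gamma m) / gamma n * d (u n) (u (S n))).
  { apply Rmult_le_compat_r; [assumption|]. apply Rmult_le_compat_r; [|assumption].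
    apply Rlt_le, Rinv_0_lt_compat. assumption. }
  assert ((gamma n + gamma m) / gamma n * d (u n) (u (S n))
          = d (u n) (u (S n)) + gamma m * (d (u n) (u (S n)) / gamma n)) by (field; lra).
  lra.
Qed.

Lemma iter_seq_asymptotically_regular (q : X) : (forall n, is_fixed (T n) q) ->
  forall m, is_lim_seq (fun n => d (u n) (T m (u n))) 0.
Proof.
  intros Hq m.
  set (step := fun n => d (u n) (u (S n))).
  assert (Hstep0 : forall n, 0 <= step n) by (intros; apply dist_ge0, Hd).
  assert (Hstep : is_lim_seq step 0).
  { apply is_lim_seq_0_of_pow2; [exact Hstep0|].
    apply (is_lim_seq_0_of_sum_bounded _ (d x q ^ 2)); [intros; apply pow2_ge_0|].
    exact (iter_seq_steps_sq_sum_le q Hq). }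
  assert (Hratio : is_lim_seq (fun n => step n / gamma n) 0).
  { apply (is_lim_seq_ratio_0 step gamma (d x q ^ 2)); auto.
    exact (iter_seq_steps_sq_sum_le q Hq). }
  apply (is_lim_seq_le_le (fun _ => 0) _ (fun n => 2 * step n + gamma m * (step n / gamma n))).
  - intros n. split; [apply dist_ge0, Hd | apply iter_seq_dist_image_le].
  - apply is_lim_seq_const.
  - replace (Finite 0) with (Finite (2 * 0 + gamma m * 0)) by (f_equal; ring).
    apply is_lim_seq_plus'; apply is_lim_seq_mult'; auto using is_lim_seq_const.
Qed.

Lemma iter_seq_subseq_center_fixed (q : X) (phi : nat -> nat) (c : X) :
  (forall n, is_fixed (T n) q) -> (forall n, (phi n < phi (S n))%nat) ->
  (forall y, rad d (fun n => u (phi n)) c <= rad d (fun n => u (phi n)) y) ->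
  forall m, is_fixed (T m) c.
Proof.
  intros Hq Hphi Hc m.
  apply (P2_center_fixed d Hd (T m) (fun n => u (phi n)) c (HP2 m)
           (iter_seq_subseq_bounded q phi Hq)); [|exact Hc].
  exact (is_lim_seq_subseq _ 0 phi (eventually_subseq phi Hphi)
           (iter_seq_asymptotically_regular q Hq m)).
Qed.

End Regularity.

Lemma iter_seq_subseq_center (phi : nat -> nat) (c c' : X) :
  (forall n, is_fixed (T n) c) -> (forall n, is_fixed (T n) c') ->
  (forall n, (phi n < phi (S n))%nat) ->
  (forall y, rad d u c <= rad d u y) ->
  (forall y, rad d (fun n => u (phi n)) c' <= rad d (fun n => u (phi n)) y) ->
  forall y, rad d (fun n => u (phi n)) c <= rad d (fun n => u (phi n)) y.
Proof.
  intros Hc Hc' Hphi Hcen Hcen' y.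
  rewrite (rad_iter_seq_subseq c phi Hc Hphi).
  eapply Rle_trans; [apply Hcen|].
  rewrite <- (rad_iter_seq_subseq c' phi Hc' Hphi). apply Hcen'.
Qed.

End Iteration.

Theorem theorem3p5 (X : Type) (d : X -> X -> R) (T : nat -> X -> X)
  (gamma : nat -> R) (x : X) :
  CAT0 d ->
  complete_metric d ->
  (forall n, property_P2 d (T n)) ->
  (exists p : X, forall n, is_fixed (T n) p) ->
  (forall n, 0 < gamma n) ->
  (forall M : R, exists N : nat, M < sum_f_R0 (fun k => (gamma k) ^ 2) N) ->
  (forall (n m : nat) (w : X),
      d (T n w) (T m w) <= Rabs (gamma n - gamma m) / gamma n * d w (T n w)) ->
  (forall n : nat,
      d (iter_seq T x (S n)) (iter_seq T x (S (S n))) / gamma (S n) <=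
      d (iter_seq T x n) (iter_seq T x (S n)) / gamma n) ->
  exists p : X, (forall n, is_fixed (T n) p) /\ Delta_converges d (iter_seq T x) p.
Proof.
  intros Hcat Hcomp HP2 [q Hq] Hgamma Hdiv HC1 HC2.
  pose proof (proj1 Hcat) as Hd.
  pose proof (iter_seq_subseq_bounded d T x Hd HP2 q) as Hbounded.
  pose proof (iter_seq_subseq_center_fixed d T x Hd HP2 gamma Hgamma Hdiv HC1 HC2 q)
    as Hcenter_fixed.
  destruct (rad_center_exists d Hcat (iter_seq T x) Hcomp (Hbounded (fun n => n) Hq))
    as [c Hc].
  assert (HcF : forall n, is_fixed (T n) c)
    by exact (Hcenter_fixed (fun n => n) c Hq (fun n => Nat.lt_succ_diag_r n) Hc).
  exists c. split; [exact HcF|]. split; [exact (Hbounded (fun n => n) Hq)|].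
  intros phi Hphi.
  destruct (rad_center_exists d Hcat _ Hcomp (Hbounded phi Hq)) as [c' Hc'].
  assert (Hc_phi := iter_seq_subseq_center d T x Hd HP2 phi c c' HcF
                      (Hcenter_fixed phi c' Hq Hphi Hc') Hphi Hc Hc').
  split.
  - apply asymptotic_center_rad; [exact Hd | exact (Hbounded phi Hq) | exact Hc_phi].
  - intros c'' Hc''. apply (rad_center_unique d Hcat _ c c'' (Hbounded phi Hq) Hc_phi).
    apply (asymptotic_center_rad d Hd); [exact (Hbounded phi Hq) | exact Hc''].
Qed.
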